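(* Let a quantum system be given, i.e. a finite-dimensional complex Hilbert space $\mathcal{H}$ together with sets $\mathcal{P},\mathcal{M},\mathcal{T}$ of preparations, measurements and transformations, where every density operator on $\mathcal{H}$ represents some preparation and every self-adjoint operator on $\mathcal{H}$ represents some measurement. Then every ontic model for this quantum system that is $\psi$-complete is also $\psi$-ontic.
   Context: A quantum system consists of a finite-dimensional Hilbert space $\mathcal{H}$ and sets $\mathcal{P}$ (preparations), $\mathcal{M}$ (measurements), $\mathcal{T}$ (transformations), together with surjective (possibly many-to-one) maps assigning to each $P\in\mathcal{P}$ a density operator $\rho$ on $\mathcal{H}$, to each $M\in\mathcal{M}$ a self-adjoint operator $A$ on $\mathcal{H}$ (a projection-valued measurement), and to each $T\in\mathcal{T}$ a unitary $U$ on $\mathcal{H}$; we write $P_\rho, M_A, T_U$. For an eigenvalue $a$ of $A$, $[a]_A$ denotes the projection onto the corresponding eigenspace; the quantum probability of outcome $a$ is $\mathrm{Tr}(U\rho U^*[a]_A)$. For a unit vector $\psi$, $[\psi]$ is the projection onto its span; a pure state is $\rho=[\psi]$. An ontic model for the system consists of a measurable space $(\Lambda,\Sigma)$; for each $M\in\mathcal{M}$ a Markov kernel $p_M$ (response function) assigning to each $\lambda\in\Lambda$ a probability distribution $p_M(\cdot|\lambda)$ on the eigenvalues of the operator representing $M$; for each $P\in\mathcal{P}$ a probability measure $\mu_P$ on $(\Lambda,\Sigma)$; for each $T\in\mathcal{T}$ a Markov kernel $\gamma_T$ from $(\Lambda,\Sigma)$ to itself; such that for all $P_\rho,M_A,T_U$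 and eigenvalues $a$: $\int p_{M_A}(a|\lambda)\,d\mu_{P_\rho}(\lambda)=\mathrm{Tr}(\rho[a]_A)$ and $\iint p_{M_A}(a|\lambda)\gamma_{T_U}(d\lambda|\tilde\lambda)\,d\mu_{P_\rho}(\tilde\lambda)=\mathrm{Tr}(U\rho U^*[a]_A)$. The ontic model is trivial with respect to $\mathcal{M}'\subset\mathcal{M}$ and $\mathcal{P}'\subset\mathcal{P}$ if for every $P_\rho\in\mathcal{P}'$, every $M_A\in\mathcal{M}'$ and every eigenvalue $a$ of $A$, $\int|p_{M_A}(a|\lambda)-\mathrm{Tr}(\rho[a]_A)|\,d\mu_{P_\rho}(\lambda)=0$. It is $\psi$-complete if it is trivial with respect to all of $\mathcal{M}$ and $\mathcal{P}$. The ontic model is $\psi$-ontic if for any two preparations $P_1,P_2$ represented by distinct pure quantum states, $\sup_{\Delta\in\Sigma}|\mu_{P_1}(\Delta)-\mu_{P_2}(\Delta)|=1$. *)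

From HB Require Import structures.
From mathcomp Require Import all_boot all_order all_algebra.
From mathcomp Require Import all_classical all_reals.
From mathcomp Require Import ereal measure lebesgue_measure lebesgue_integral probability kernel.
From mathcomp Require Import complex.

Set Implicit Arguments.
Unset Strict Implicit.
Unset Printing Implicit Defensive.

Import Order.TTheory GRing.Theory Num.Theory.
Local Open Scope ring_scope.
Local Open Scope classical_set_scope.

(* The Hilbert space is C^n (column vectors 'cV_n), with C = R[i]. *)

Definition adj (R : rcfType) (m k : nat) (M : 'M[R[i]]_(m, k)) : 'M[R[i]]_(k, m) :=
  (map_mx (@conjc R) M)^T.

Definition selfadjoint (R : rcfType) (n : nat) (A : 'M[R[i]]_n) : Prop :=
  adj A = A.

Definition unitary (R : rcfType) (n : nat) (U : 'M[R[i]]_n) : Prop :=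
  U *m adj U = 1%:M /\ adj U *m U = 1%:M.

Definition density (R : rcfType) (n : nat) (rho : 'M[R[i]]_n) : Prop :=
  [/\ selfadjoint rho,
      (forall v : 'cV[R[i]]_n, 0 <= (adj v *m rho *m v) 0 0)
    & \tr rho = 1].

Definition pure_state (R : rcfType) (n : nat) (rho : 'M[R[i]]_n) : Prop :=
  exists psi : 'cV[R[i]]_n, adj psi *m psi = 1%:M /\ rho = psi *m adj psi.

Definition is_eigenvalue (R : rcfType) (n : nat) (A : 'M[R[i]]_n) (a : R[i]) : Prop :=
  exists2 v : 'cV[R[i]]_n, v != 0 & A *m v = a *: v.

(* [a]_A : orthogonal projection onto the eigenspace {v | A v = a v}.
   The rows of B := row_base (eigenspace A^T a) are (transposes of) a basis
   of that eigenspace; with C := B^T (columns form a basis), the orthogonal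
   projection onto the column space of C is C (C^* C)^{-1} C^*. *)
Definition eigproj (R : rcfType) (n : nat) (A : 'M[R[i]]_n) (a : R[i]) : 'M[R[i]]_n :=
  let C := (row_base (eigenspace A^T a))^T in
  C *m invmx (adj C *m C) *m adj C.

(* quantum probability Tr(U rho U^* [a]_A) (a real number; we take its real part,
   the imaginary part being zero for density rho and self-adjoint A) *)
Definition qprob (R : rcfType) (n : nat) (U rho A : 'M[R[i]]_n) (a : R[i]) : R :=
  complex.Re (\tr (U *m rho *m adj U *m eigproj A a)).

Local Open Scope ereal_scope.

(* An ontic model for the quantum system with preparations Prep (rho),
   measurements Meas (obs), transformations Trans (uni), on the measurable
   space Lam, with response functions p, preparation measures mu and Markov
   kernels gam. p M l is the distribution p_M(.|l) on the eigenvalues of obs M. *)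
Definition ontic_model (R : realType) (n : nat)
    (Prep Meas Trans : Type)
    (rho : Prep -> 'M[R[i]]_n) (obs : Meas -> 'M[R[i]]_n) (uni : Trans -> 'M[R[i]]_n)
    (d : measure_display) (Lam : measurableType d)
    (p : Meas -> Lam -> R[i] -> R)
    (mu : Prep -> probability Lam R)
    (gam : Trans -> R.-pker Lam ~> Lam) : Prop :=
  (* response functions are Markov kernels to the (finite) set of eigenvalues *)
  (forall M a, measurable_fun setT (fun l => p M l a)) /\
  (forall M l a, (0 <= p M l a)%R) /\
  (forall M l a, ~ is_eigenvalue (obs M) a -> p M l a = 0%R) /\
  (forall M l, (\sum_(a \in [set a | is_eigenvalue (obs M) a]) p M l a)%R = 1%R) /\
  (forall P M a, is_eigenvalue (obs M) a ->
     \int[mu P]_l (p M l a)%:E = (qprob 1%:M (rho P) (obs M) a)%:E) /\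
  (forall P M T a, is_eigenvalue (obs M) a ->
     \int[mu P]_lt (\int[gam T lt]_l (p M l a)%:E)
       = (qprob (uni T) (rho P) (obs M) a)%:E).

Definition trivial_wrt (R : realType) (n : nat) (Prep Meas : Type)
    (rho : Prep -> 'M[R[i]]_n) (obs : Meas -> 'M[R[i]]_n)
    (d : measure_display) (Lam : measurableType d)
    (p : Meas -> Lam -> R[i] -> R) (mu : Prep -> probability Lam R)
    (M' : set Meas) (P' : set Prep) : Prop :=
  forall P M a, P' P -> M' M -> is_eigenvalue (obs M) a ->
    \int[mu P]_l (`|p M l a - qprob 1%:M (rho P) (obs M) a|%R)%:E = 0.

Definition psi_complete (R : realType) (n : nat) (Prep Meas : Type)
    (rho : Prep -> 'M[R[i]]_n) (obs : Meas -> 'M[R[i]]_n)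
    (d : measure_display) (Lam : measurableType d)
    (p : Meas -> Lam -> R[i] -> R) (mu : Prep -> probability Lam R) : Prop :=
  trivial_wrt rho obs p mu setT setT.

Definition psi_ontic (R : realType) (n : nat) (Prep : Type)
    (rho : Prep -> 'M[R[i]]_n)
    (d : measure_display) (Lam : measurableType d)
    (mu : Prep -> probability Lam R) : Prop :=
  forall P1 P2, pure_state (rho P1) -> pure_state (rho P2) -> rho P1 <> rho P2 ->
    ereal_sup [set `|mu P1 D - mu P2 D| | D in [set D | measurable D]] = 1.

(** Given distinct pure states [psi1] and [psi2], measure the observable
    [A = psi1 psi1^*] itself.  Its eigenprojection for the eigenvalue 1 is [A],
    so outcome 1 has probability 1 in [psi1] and [|<psi1, psi2>|^2] in [psi2];
    the latter is not 1, since equality in Cauchy-Schwarz would force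
    [psi2 = c psi1] with [|c| = 1], i.e. equal pure states.  Psi-completeness says
    that the response [p_A(1|l)] equals these constants almost everywhere, so
    the level set [D = {l | p_A(1|l) = 1}] has measure 1 under [mu_psi1] and 0
    under [mu_psi2], hence the two measures are at total variation distance 1. *)

From HB Require Import structures.
From mathcomp Require Import all_boot all_order all_algebra.
From mathcomp Require Import all_classical all_reals.
From mathcomp Require Import ereal measure lebesgue_measure lebesgue_integral probability kernel.
From mathcomp Require Import complex.
From mathcomp Require Import lra measurable_realfun.

Set Implicit Arguments.
Unset Strict Implicit.
Unset Printing Implicit Defensive.
Import Order.TTheory GRing.Theory Num.Theory.

Local Open Scope ring_scope.

Section Adjoint.
Variable R : rcfType.
Local Notation C := R[i].

Lemma adjE m k (M : 'M[C]_(m, k)) i j : adj M i j = conjc (M j i).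
Proof. by rewrite /adj !mxE. Qed.

Lemma adjM m k l (M : 'M[C]_(m, k)) (N : 'M[C]_(k, l)) :
  adj (M *m N) = adj N *m adj M.
Proof. by rewrite /adj map_mxM trmx_mul. Qed.

Lemma adjK m k (M : 'M[C]_(m, k)) : adj (adj M) = M.
Proof. by apply/matrixP => i j; rewrite !adjE conjcK. Qed.

Lemma adjB m k (M N : 'M[C]_(m, k)) : adj (M - N) = adj M - adj N.
Proof. by apply/matrixP => i j; rewrite !adjE !mxE rmorphB. Qed.

Lemma adj0 m k : adj (0 : 'M[C]_(m, k)) = 0.
Proof. by rewrite /adj map_mx0 trmx0. Qed.

Lemma adj_scalar k (a : C) : adj (a%:M : 'M[C]_k) = (conjc a)%:M.
Proof. by apply/matrixP => i j; rewrite adjE !mxE rmorphMn eq_sym. Qed.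

Lemma adj1 k : adj (1%:M : 'M[C]_k) = 1%:M.
Proof. by rewrite adj_scalar conjc1. Qed.

Lemma adj_mulmx_self_eq0 m (v : 'cV[C]_m) : adj v *m v = 0 -> v = 0.
Proof.
move=> /matrixP /(_ 0 0); rewrite !mxE => vv0.
apply/matrixP => i j; rewrite (ord1 j) mxE.
have ge0 k : predT k -> 0 <= adj v 0 k * v k 0 by rewrite adjE mulrC mulcJ_ge0.
move/eqP: (@psumr_eq0P _ _ predT _ ge0 vv0 i isT).
by rewrite adjE mulf_eq0 conjc_eq0 orbb => /eqP.
Qed.

Lemma Re_mulJ_eq1 (z : C) : complex.Re (conjc z * z) = 1 -> conjc z * z = 1.
Proof.
case: z => x y /= zz1; apply/eqP; rewrite eq_complex /= zz1 eqxx /=.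
by rewrite mulNr (mulrC y) subrr.
Qed.

Lemma mulmx_cV_inj m k (X Y : 'M[C]_(m, k)) :
  (forall x : 'cV[C]_k, X *m x = Y *m x) -> X = Y.
Proof.
move=> XY; apply/matrixP => i j.
by move/matrixP/(_ i 0): (XY (delta_mx j 0)); rewrite -!colE !mxE.
Qed.

Lemma gram_unitmx k m (B : 'M[C]_(k, m)) :
  row_free B -> adj B^T *m B^T \in unitmx.
Proof.
move=> freeB; rewrite -row_free_unit -kermx_eq0; apply/eqP/row_matrixP => i.
rewrite row0; set y := row i _.
have yG : y *m (adj B^T *m B^T) = 0 by rewrite /y -row_mul mulmx_ker row0.
have : adj (B^T *m adj y) *m (B^T *m adj y) = 0.
  by rewrite adjM adjK !mulmxA -(mulmxA y) yG mul0mx.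
move/adj_mulmx_self_eq0 => Byt0.
have : (adj y)^T *m B = 0 by rewrite -[B]trmxK -trmx_mul Byt0 trmx0.
move/eqP; rewrite mulmx_free_eq0 // => /eqP yt0.
by rewrite -[y]adjK -[adj y]trmxK yt0 trmx0 adj0.
Qed.

End Adjoint.

Section Eigenprojection.
Variables (R : rcfType) (n : nat).
Local Notation C := R[i].
Implicit Types (A : 'M[C]_n) (a : C) (x : 'cV[C]_n).

Lemma eigproj_eigenvector A a x :
  A *m x = a *: x -> eigproj A a *m x = x.
Proof.
move=> Ax; rewrite /eigproj; set B := row_base _.
have : (x^T <= B)%MS.
  by rewrite eq_row_base; apply/eigenspaceP; rewrite -trmx_mul Ax linearZ.
case/submxP => D xB.
have -> : x = B^T *m D^T by rewrite -trmx_mul -xB trmxK.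
rewrite -!mulmxA (mulmxA (adj B^T)) (mulmxA (invmx _)) mulVmx ?mul1mx //.
exact/gram_unitmx/row_base_free.
Qed.

(* Self-adjointness gives [adj B^T *m A = a^* *: adj B^T], so for [a != 0] the
   factor [adj B^T] of the projection already kills the kernel of [A]. *)
Lemma eigproj_ker A a x :
  selfadjoint A -> a != 0 -> A *m x = 0 -> eigproj A a *m x = 0.
Proof.
move=> sA a0 Ax; rewrite /eigproj; set B := row_base _.
have BA : B *m A^T = a *: B.
  by apply/eigenspaceP; rewrite eq_row_base submx_refl.
have BtA : adj B^T *m A = conjc a *: adj B^T.
  have -> : adj B^T *m A = adj B^T *m adj A by rewrite sA.
  rewrite -adjM -[A *m _]trmxK trmx_mul trmxK BA.
  by apply/matrixP => i j; rewrite !adjE !mxE rmorphM.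
have Bx : adj B^T *m x = 0.
  have : conjc a *: (adj B^T *m x) = 0 by rewrite scalemxAl -BtA -mulmxA Ax mulmx0.
  by move/eqP; rewrite scaler_eq0 conjc_eq0 (negPf a0) => /eqP.
by rewrite -!mulmxA Bx !mulmx0.
Qed.

End Eigenprojection.

Section PureStates.
Variables (R : rcfType) (n : nat).
Local Notation C := R[i].
Implicit Types (psi : 'cV[C]_n).

Lemma rank1_selfadjoint psi : selfadjoint (psi *m adj psi).
Proof. by rewrite /selfadjoint adjM adjK. Qed.

Lemma rank1_eigenvector psi :
  adj psi *m psi = 1%:M -> psi *m adj psi *m psi = psi.
Proof. by move=> psi1; rewrite -mulmxA psi1 mulmx1. Qed.

Lemma rank1_eigenvalue1 psi :
  adj psi *m psi = 1%:M -> is_eigenvalue (psi *m adj psi) 1.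
Proof.
move=> psi1; exists psi; last by rewrite rank1_eigenvector ?scale1r.
apply/eqP => psi0; move/matrixP/(_ 0 0): psi1.
by rewrite psi0 mulmx0 !mxE => /eqP; rewrite eq_sym oner_eq0.
Qed.

(* Split [x] along [psi] and its orthogonal complement. *)
Lemma eigproj_rank1 psi :
  adj psi *m psi = 1%:M -> eigproj (psi *m adj psi) 1 = psi *m adj psi.
Proof.
move=> psi1; apply: mulmx_cV_inj => x.
set w := x - psi *m (adj psi *m x).
have psiw : adj psi *m w = 0 by rewrite /w mulmxBr (mulmxA (adj psi)) psi1 mul1mx subrr.
have -> : x = psi *m (adj psi *m x) + w by rewrite /w addrC subrK.
have Aw : psi *m adj psi *m w = 0 by rewrite -mulmxA psiw mulmx0.
have Apsi : psi *m adj psi *m psi = psi by exact: rank1_eigenvector.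
have Ppsi : eigproj (psi *m adj psi) 1 *m psi = psi.
  by apply: eigproj_eigenvector; rewrite Apsi scale1r.
clearbody w; rewrite !mulmxDr Aw (eigproj_ker (rank1_selfadjoint psi) (oner_neq0 _) Aw).
by rewrite !mulmxA Ppsi Apsi.
Qed.

Lemma qprob_rank1 (psi1 psi2 : 'cV[C]_n) : adj psi1 *m psi1 = 1%:M ->
  qprob 1%:M (psi2 *m adj psi2) (psi1 *m adj psi1) 1
  = complex.Re (conjc ((adj psi1 *m psi2) 0 0) * (adj psi1 *m psi2) 0 0).
Proof.
move=> psi1_unit; rewrite /qprob adj1 mul1mx mulmx1 eigproj_rank1 //.
rewrite -mulmxA mxtrace_mulC /mxtrace big_ord1 !mulmxA -(mulmxA _ _ psi2).
have -> : adj psi2 *m psi1 = adj (adj psi1 *m psi2) by rewrite adjM adjK.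
by rewrite [adj psi1 *m psi2]mx11_scalar adj_scalar -scalar_mxM !mxE !mulr1n.
Qed.

(* Equality case of Cauchy-Schwarz: [w] is the component of [psi2] orthogonal
   to [psi1], and [|w|^2 = 1 - |<psi1, psi2>|^2]. *)
Lemma rank1_eq_of_overlap1 (psi1 psi2 : 'cV[C]_n) :
  adj psi1 *m psi1 = 1%:M -> adj psi2 *m psi2 = 1%:M ->
  conjc ((adj psi1 *m psi2) 0 0) * (adj psi1 *m psi2) 0 0 = 1 ->
  psi1 *m adj psi1 = psi2 *m adj psi2.
Proof.
move=> psi1_unit psi2_unit; set a := (_ *m _) 0 0 => aa1.
have al : adj psi1 *m psi2 = a%:M by exact: mx11_scalar.
have la : adj psi2 *m psi1 = (conjc a)%:M by rewrite -[psi1]adjK -adjM al adj_scalar.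
set w := psi2 - psi1 *m a%:M.
have psiw : adj psi1 *m w = 0 by rewrite /w mulmxBr mulmxA psi1_unit mul1mx al subrr.
have : adj w *m w = 0.
  rewrite {1}/w adjB adjM mulmxBl -mulmxA psiw mulmx0 subr0.
  by rewrite mulmxBr psi2_unit mulmxA la -scalar_mxM aa1 subrr.
move/adj_mulmx_self_eq0/eqP; rewrite subr_eq0 => /eqP ->.
by rewrite adjM adj_scalar mulmxA -(mulmxA psi1) -scalar_mxM mulrC aa1 mulmx1.
Qed.

Lemma qprob_rank1_neq1 (psi1 psi2 : 'cV[C]_n) :
  adj psi1 *m psi1 = 1%:M -> adj psi2 *m psi2 = 1%:M ->
  psi1 *m adj psi1 <> psi2 *m adj psi2 ->
  qprob 1%:M (psi2 *m adj psi2) (psi1 *m adj psi1) 1 != 1.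
Proof.
move=> psi1_unit psi2_unit neq; rewrite qprob_rank1 //.
by apply/eqP => /Re_mulJ_eq1 /(rank1_eq_of_overlap1 psi1_unit psi2_unit).
Qed.

Lemma qprob_rank1_self (psi : 'cV[C]_n) :
  adj psi *m psi = 1%:M -> qprob 1%:M (psi *m adj psi) (psi *m adj psi) 1 = 1.
Proof. by move=> psi1; rewrite qprob_rank1 // psi1 mxE conjc1 mulr1. Qed.

End PureStates.

Local Open Scope classical_set_scope.

Lemma abse_sub_le1 (R : realDomainType) (x y : \bar R) :
  (0 <= x <= 1)%E -> (0 <= y <= 1)%E -> (`|x - y| <= 1)%E.
Proof.
case: x => [r| |] //; case: y => [s| |] //=; rewrite ?andbF //.
rewrite !lee_fin => /andP[r0 r1] /andP[s0 s1].
by rewrite ler_norml; apply/andP; split; lra.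
Qed.

Section ProbabilityFacts.
Variables (R : realType) (d : measure_display) (T : measurableType d).
Local Open Scope ereal_scope.

Lemma measurable_level (f : T -> R) (q : R) :
  measurable_fun setT f -> measurable [set l | f l = q].
Proof.
by move=> mf; rewrite -[X in measurable X]setTI; exact: mf measurableT _ (measurable_set1 q).
Qed.

Lemma integral_abs_sub_eq0_neq (mu : probability T R) (f : T -> R) (q : R) :
  measurable_fun setT f -> \int[mu]_l (`|f l - q|)%:E = 0 ->
  mu [set l | f l <> q] = 0.
Proof.
move=> mf int0.
have mfq : measurable_fun setT (fun l => (f l - q)%:E).
  by apply/measurable_EFinP; exact: measurable_funB mf (measurable_cst q).
have [N [mN N0 subN]] := (ae_eq_integral_abs mu measurableT mfq).1 int0.
apply/eqP; rewrite eq_le measure_ge0 andbT -N0 le_measure ?inE //=.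
  exact/measurableC/measurable_level.
move=> l fq; apply: subN => /= /(_ I) /eqP.
by rewrite eqe subr_eq0 => /eqP.
Qed.

Lemma probability_setC_eq0 (mu : probability T R) (D : set T) :
  measurable D -> mu (~` D) = 0 -> mu D = 1.
Proof.
move=> mD; rewrite probability_setC //.
move: (measure_ge0 mu D) (probability_le1 mu mD).
by case: (mu D) => [r| |] //= _ _ /eqP; rewrite -EFinB eqe subr_eq0 => /eqP <-.
Qed.

Lemma ereal_sup_abs_measure_sub_eq1 (mu1 mu2 : probability T R) (D : set T) :
  measurable D -> mu1 D = 1 -> mu2 D = 0 ->
  ereal_sup [set `|mu1 E - mu2 E| | E in [set E | measurable E]] = 1.
Proof.
move=> mD mu1D mu2D; apply/eqP; rewrite eq_le; apply/andP; split.
  apply: ge_ereal_sup => _ [E mE <-].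
  by apply: abse_sub_le1; rewrite measure_ge0 probability_le1.
by apply: ereal_sup_ubound; exists D => //; rewrite mu1D mu2D sube0 abse1.
Qed.

Lemma integral_abs_sub_eq0_level (mu : probability T R) (f : T -> R) (q r : R) :
  measurable_fun setT f -> \int[mu]_l (`|f l - q|)%:E = 0 -> r != q ->
  mu [set l | f l = r] = 0.
Proof.
move=> mf int0 rq; apply/eqP; rewrite eq_le measure_ge0 andbT.
rewrite -(integral_abs_sub_eq0_neq mf int0) le_measure ?inE //=.
- exact: measurable_level.
- exact/measurableC/measurable_level.
by move=> l /= ->; exact/eqP.
Qed.

End ProbabilityFacts.

Theorem proposition1 (R : realType) (n : nat)
    (Prep Meas Trans : Type)
    (rho : Prep -> 'M[R[i]]_n) (obs : Meas -> 'M[R[i]]_n) (uni : Trans -> 'M[R[i]]_n)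
    (rho_density : forall P, density (rho P))
    (rho_onto : forall r : 'M[R[i]]_n, density r -> exists P, rho P = r)
    (obs_sa : forall M, selfadjoint (obs M))
    (obs_onto : forall A : 'M[R[i]]_n, selfadjoint A -> exists M, obs M = A)
    (uni_unitary : forall T, unitary (uni T))
    (uni_onto : forall U : 'M[R[i]]_n, unitary U -> exists T, uni T = U)
    (d : measure_display) (Lam : measurableType d)
    (p : Meas -> Lam -> R[i] -> R)
    (mu : Prep -> probability Lam R)
    (gam : Trans -> R.-pker Lam ~> Lam) :
  ontic_model rho obs uni p mu gam ->
  psi_complete rho obs p mu ->
  psi_ontic rho mu.
Proof.
move=> [p_mfun _] complete P1 P2 [psi1 [psi1_unit rho1]] [psi2 [psi2_unit rho2]].
rewrite rho1 rho2 => neq.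
have [M obsM] := obs_onto _ (rank1_selfadjoint psi1).
have eig1 : is_eigenvalue (obs M) 1 by rewrite obsM; exact: rank1_eigenvalue1.
have mf := p_mfun M 1.
have := complete P1 M 1 I I eig1; rewrite obsM rho1 qprob_rank1_self // => int1.
have := complete P2 M 1 I I eig1; rewrite obsM rho2 => int2.
have mD := measurable_level 1%R mf.
apply: (ereal_sup_abs_measure_sub_eq1 mD).
  exact: probability_setC_eq0 mD (integral_abs_sub_eq0_neq mf int1).
by apply: integral_abs_sub_eq0_level mf int2 _; rewrite eq_sym qprob_rank1_neq1.
Qed.
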